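(* Let $N\in\mathbb N$ and let $f\in R_J(N)$ be nonzero. Then every extreme point of $\nu_J(f)$ lies in $\operatorname{supp}(f)$, and $$\nu_J(f)=\operatorname{Closure}_{\mathbb R^2}\bigl(\operatorname{conv}(\operatorname{supp}(f);\vec A)\bigr)=\operatorname{conv}(\operatorname{supp}(f);\vec A).$$
   Context: $R(N)=\mathbb C[\zeta^{1/N},\zeta^{-1/N}]((q^{1/N}))$ is the ring of formal series $f=\sum_{n,r\in\frac1N\mathbb Z}c(n,r)q^n\zeta^r$ such that for each $n$ only finitely many $r$ have $c(n,r)\ne0$ and $n$ is bounded below on the support $\operatorname{supp}(f)=\{(n,r): c(n,r)\neq0\}$. $R_J(N)$ is the set of $f\in R(N)$ for which there exist $a>0$ and $b,c\in\mathbb R$ with $\operatorname{supp}(f)\subseteq\{(n,r)\in\mathbb R^2: n\ge ar^2+br+c\}$. Let $\vec A=\{(1,0)\}\subset\mathbb R^2$ (the direction of the ray $[0,\infty)\times\{0\}$). For $P\subseteq\mathbb R^2$, $\operatorname{conv}(P;\vec A)=\operatorname{conv}(P)+[0,\infty)\times\{0\}$, i.e. all $\sum_i\alpha_ip_i+\beta(1,0)$ with $p_i\in P$, $\alpha_i\ge0$, $\sum\alpha_i=1$, $\beta\ge0$ (finite sums). The Jacobi valuation is $\nu_J(f)=\operatorname{Closure}_{\mathbb R^2}(\operatorname{conv}(\operatorname{supp}(f);\vec A))$. An extreme point of a convex set $C$ is a point of $C$ not in the relative interior of any line segment contained in $C$. *)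

From HB Require Import structures.
From mathcomp Require Import all_boot all_order all_algebra.
From mathcomp Require Import complex.
From mathcomp Require Import all_classical all_reals all_analysis.
Set Implicit Arguments. Unset Strict Implicit. Unset Printing Implicit Defensive.
Import Order.TTheory GRing.Theory Num.Theory.
Import numFieldNormedType.Exports.
Local Open Scope classical_set_scope.
Local Open Scope ring_scope.

(* An element f of R(N) = C[zeta^{1/N},zeta^{-1/N}]((q^{1/N})) is encoded by its
   coefficient function: c a b is the coefficient of q^{a/N} zeta^{b/N}
   (a b : int); C is modelled as the complex numbers R[i] over R : realType. *)
Definition coeffs (R : realType) := int -> int -> R[i].

Definition in_RN (R : realType) (f : coeffs R) : Prop :=
  (forall a : int, finite_set [set b : int | f a b != 0]) /\
  (exists m : int, forall a b : int, f a b != 0 -> m <= a).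

Definition supp (R : realType) (N : nat) (f : coeffs R) : set (R * R) :=
  [set p | exists a b : int,
     p = ((a%:~R / N%:R : R), (b%:~R / N%:R : R)) /\ f a b != 0].

Definition in_RJ (R : realType) (N : nat) (f : coeffs R) : Prop :=
  in_RN f /\
  exists (a b c : R), 0 < a /\
    supp N f `<=` [set p | a * p.2 ^+ 2 + b * p.2 + c <= p.1].

(* conv(P; A) with A = {(1,0)}: finite convex combinations of points of P
   plus beta (1,0), beta >= 0 *)
Definition conv_dir (R : realType) (P : set (R * R)) : set (R * R) :=
  [set x | exists (k : nat) (p : 'I_k -> R * R) (alpha : 'I_k -> R) (beta : R),
     [/\ (forall i, P (p i)), (forall i, 0 <= alpha i),
         \sum_(i < k) alpha i = 1, 0 <= beta &
         x = (\sum_(i < k) alpha i * (p i).1 + beta,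
              \sum_(i < k) alpha i * (p i).2)]].

Definition nuJ (R : realType) (N : nat) (f : coeffs R) : set (R * R) :=
  closure (conv_dir (supp N f)).

Definition segpt (R : realType) (y z : R * R) (t : R) : R * R :=
  ((1 - t) * y.1 + t * z.1, (1 - t) * y.2 + t * z.2).

Definition extreme_point (R : realType) (C : set (R * R)) (x : R * R) : Prop :=
  C x /\
  forall y z : R * R, y <> z ->
    (forall t : R, 0 <= t <= 1 -> C (segpt y z t)) ->
    forall t : R, 0 < t < 1 -> x <> segpt y z t.

From HB Require Import structures.
From mathcomp Require Import all_boot all_order all_algebra.
From mathcomp Require Import complex.
From mathcomp Require Import all_classical all_reals all_analysis.
From mathcomp Require Import lra ring zify.
Import Order.TTheory GRing.Theory Num.Theory.
Import numFieldNormedType.Exports.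

(* Extreme points: a point of conv(S; A) that carries a positive shift along
   (1,0), or gives a vertex p_j a weight strictly between 0 and 1, is interior to
   a segment contained in conv(S; A); so an extreme point is a vertex.

   Closedness: let (n, r) lie in the closure of conv(S; A) and consider the chords
   of S meeting the line of second coordinate r (points of S on that line count as
   degenerate chords).  Since the second coordinates of S lie in (1/N)Z and S lies
   above a parabola, the chords meeting the line left of a given one have their
   endpoints in a bounded box, which contains only finitely many points of S; so
   some chord meets the line at a leftmost point (mu, r).  By minimality every
   slope from a point of S below the line to (mu, r) is at most every slope from
   (mu, r) to a point of S above it, so a line through (mu, r) keeps S, hence the
   closure, on the side of (1,0).  Thus n >= mu, and (n, r) is that meeting point
   shifted along (1,0). *)

Set Implicit Arguments.
Unset Strict Implicit.
Unset Printing Implicit Defensive.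
Local Open Scope classical_set_scope.
Local Open Scope ring_scope.

Section DirectedCombinations.
Variable R : realType.
Implicit Types (P : set (R * R)) (x y : R * R).

Definition dircomb k (p : 'I_k -> R * R) (alpha : 'I_k -> R) (beta : R) : R * R :=
  (\sum_(i < k) alpha i * (p i).1 + beta, \sum_(i < k) alpha i * (p i).2).

Definition convex_weights k (alpha : 'I_k -> R) : Prop :=
  (forall i, 0 <= alpha i) /\ \sum_(i < k) alpha i = 1.

Lemma conv_dir_dircomb P k (p : 'I_k -> R * R) (alpha : 'I_k -> R) beta :
  (forall i, P (p i)) -> convex_weights alpha -> 0 <= beta ->
  conv_dir P (dircomb p alpha beta).
Proof. by move=> Pp [alpha_ge0 alpha_sum] beta_ge0; exists k, p, alpha, beta. Qed.

Lemma segpt_dircomb k (p : 'I_k -> R * R) (alpha alpha' : 'I_k -> R) beta beta' t :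
  segpt (dircomb p alpha beta) (dircomb p alpha' beta') t =
  dircomb p (fun i => (1 - t) * alpha i + t * alpha' i) ((1 - t) * beta + t * beta').
Proof.
have mix (g : 'I_k -> R) : \sum_(i < k) ((1 - t) * alpha i + t * alpha' i) * g i =
    (1 - t) * \sum_(i < k) alpha i * g i + t * \sum_(i < k) alpha' i * g i.
  by rewrite !mulr_sumr -big_split; apply: eq_bigr => i _ /=; ring.
by rewrite /segpt /dircomb /= !mix; congr pair; ring.
Qed.

Lemma convex_weights_mix k (alpha alpha' : 'I_k -> R) t :
  convex_weights alpha -> convex_weights alpha' -> 0 <= t <= 1 ->
  convex_weights (fun i => (1 - t) * alpha i + t * alpha' i).
Proof.
move=> [ge0 sum1] [ge0' sum1'] /andP[t_ge0 t_le1]; split.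
  by move=> i; apply: addr_ge0; apply: mulr_ge0 => //; lra.
by rewrite big_split /= -!mulr_sumr sum1 sum1'; ring.
Qed.

Lemma conv_dir_segpt P k (p : 'I_k -> R * R) (alpha alpha' : 'I_k -> R) beta beta' t :
  (forall i, P (p i)) -> convex_weights alpha -> convex_weights alpha' ->
  0 <= beta -> 0 <= beta' -> 0 <= t <= 1 ->
  conv_dir P (segpt (dircomb p alpha beta) (dircomb p alpha' beta') t).
Proof.
move=> Pp w w' beta_ge0 beta'_ge0 t01; rewrite segpt_dircomb.
apply: conv_dir_dircomb => //; first exact: convex_weights_mix.
by case/andP: t01 => t_ge0 t_le1; apply: addr_ge0; apply: mulr_ge0 => //; lra.
Qed.

Lemma segpt_id x t : segpt x x t = x.
Proof. by case: x => x1 x2; rewrite /segpt /=; congr pair; ring. Qed.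

Lemma segpt1 x y : segpt x y 1 = y.
Proof. by case: y => y1 y2; rewrite /segpt /=; congr pair; ring. Qed.

Definition unit_weight k (j : 'I_k) : 'I_k -> R := fun i => if i == j then 1 else 0.

Lemma dircomb_unit_weight k (p : 'I_k -> R * R) j : dircomb p (unit_weight j) 0 = p j.
Proof.
have pick (g : 'I_k -> R) : \sum_(i < k) unit_weight j i * g i = g j.
  by rewrite (bigD1 j) //= /unit_weight eqxx mul1r big1 ?addr0 // => i /negPf ->; rewrite mul0r.
by rewrite /dircomb !pick addr0; case: (p j).
Qed.

(* For [alpha j = 1] this divides by 0 and gives the zero function;
   [dircomb_split] still holds because the other weights then vanish. *)
Definition residual_weights k (alpha : 'I_k -> R) (j : 'I_k) : 'I_k -> R :=
  fun i => if i == j then 0 else alpha i / (1 - alpha j).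

Lemma dircomb_split k (p : 'I_k -> R * R) (alpha : 'I_k -> R) j :
  convex_weights alpha ->
  dircomb p alpha 0 = segpt (dircomb p (residual_weights alpha j) 0) (p j) (alpha j).
Proof.
move=> [ge0 sum1].
rewrite -(dircomb_unit_weight p j) segpt_dircomb; congr dircomb; last by ring.
apply: funext => i; rewrite /residual_weights /unit_weight.
have [->|ij] := eqVneq i j; first by ring.
rewrite mulr0 addr0.
have [alpha_j1|alpha_j_neq1] := eqVneq (alpha j) 1; last first.
  by rewrite mulrC divfK // subr_eq0 eq_sym.
have others0 : \sum_(l < k | l != j) alpha l = 0.
  by move: sum1; rewrite (bigD1 j) //= alpha_j1; lra.
move/eqP: others0; rewrite psumr_eq0 // => /allP /(_ i).
by rewrite mem_index_enum ij => /(_ isT) /eqP ->; rewrite mul0r mulr0.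
Qed.

Lemma convex_weights_residual k (alpha : 'I_k -> R) j :
  convex_weights alpha -> alpha j < 1 -> convex_weights (residual_weights alpha j).
Proof.
move=> [ge0 sum1] lt1; split => [i|].
  by rewrite /residual_weights; case: eqP => // _; apply: divr_ge0 => //; lra.
rewrite (bigD1 j) //= /residual_weights eqxx add0r.
under eq_bigr => i /negPf -> do [].
rewrite -mulr_suml.
have -> : \sum_(i < k | i != j) alpha i = 1 - alpha j.
  by move: sum1; rewrite (bigD1 j) //=; lra.
by rewrite divff // subr_eq0 eq_sym lt_eqF.
Qed.

Lemma convex_weights_unit_weight k (j : 'I_k) : convex_weights (unit_weight j).
Proof.
split => [i|]; first by rewrite /unit_weight; case: eqP.
by rewrite (bigD1 j) //= /unit_weight eqxx big1 ?addr0 // => i /negPf ->.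
Qed.

Lemma extreme_point_conv_dir P x : extreme_point (conv_dir P) x -> P x.
Proof.
move=> [[k [p [alpha [beta [Pp alpha_ge0 sum1 beta_ge0 x_eq]]]]]].
rewrite (_ : x = dircomb p alpha beta) // => extreme.
have w : convex_weights alpha by [].
have [beta_gt0|beta_le0] := ltP 0 beta.
  have neq : dircomb p alpha 0 <> dircomb p alpha (2 * beta).
    by move=> /(congr1 fst) /=; lra.
  have mid : dircomb p alpha beta =
      segpt (dircomb p alpha 0) (dircomb p alpha (2 * beta)) (1 / 2).
    by rewrite segpt_dircomb; congr dircomb; [apply: funext => i|]; field.
  case: (extreme _ _ neq _ (1 / 2) _ mid); last lra.
  by move=> t t01; apply: conv_dir_segpt => //; lra.
have beta0 : beta = 0 by apply/eqP; rewrite eq_le beta_le0 beta_ge0.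
subst beta.
have [j alpha_j_gt0] : exists j, 0 < alpha j.
  apply: contrapT => none; move: sum1; rewrite big1 => [/eqP|i _].
    by rewrite eq_sym oner_eq0.
  by apply/eqP; rewrite eq_le alpha_ge0 andbT leNgt; apply/negP => pos; apply: none; exists i.
rewrite (dircomb_split p j w).
have [alpha_j1|alpha_j_neq1] := eqVneq (alpha j) 1; first by rewrite alpha_j1 segpt1.
have alpha_j_lt1 : alpha j < 1.
  by rewrite lt_neqAle alpha_j_neq1 -sum1 (bigD1 j) //= lerDl; exact: sumr_ge0.
set q := dircomb p _ 0.
have [->|neq] := eqVneq q (p j); first by rewrite segpt_id.
case: (extreme q (p j) (elimN eqP neq) _ (alpha j)); last exact: dircomb_split.
- move=> t t01; rewrite /q -(dircomb_unit_weight p j).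
  apply: conv_dir_segpt => //; first exact: convex_weights_residual.
  exact: convex_weights_unit_weight.
- by apply/andP.
Qed.

Lemma conv_dir_segpt_shift P p q t beta :
  P p -> P q -> 0 <= t <= 1 -> 0 <= beta ->
  conv_dir P ((segpt p q t).1 + beta, (segpt p q t).2).
Proof.
move=> Pp Pq /andP[t_ge0 t_le1] beta_ge0.
exists 2%N, (fun i : 'I_2 => if i == ord0 then p else q),
  (fun i : 'I_2 => if i == ord0 then 1 - t else t), beta.
split => //; [by move=> i; case: ifP | by move=> i; case: ifP; lra | |].
  by rewrite !big_ord_recl big_ord0 /=; ring.
by rewrite !big_ord_recl !big_ord0 /= !addr0.
Qed.

End DirectedCombinations.

Section Halfplanes.
Variable R : realType.

Definition halfplane (u v w : R) : set (R * R) :=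
  [set y | 0 <= u * y.1 + v * y.2 + w].

Lemma closed_halfplane u v w : closed (halfplane u v w).
Proof.
rewrite (_ : halfplane u v w = (fun y : R * R => u * y.1 + v * y.2 + w) @^-1` [set r | 0 <= r]) //.
apply: preimage_closed; last exact: closed_ge.
move=> y _.
have cst (k : R) : {for y, continuous (fun _ : R * R => k)} by exact: cst_continuous.
have fst_y : {for y, continuous (fun y : R * R => y.1)} by exact: cvg_fst.
have snd_y : {for y, continuous (fun y : R * R => y.2)} by exact: cvg_snd.
exact: continuousD (continuousD (continuousM (cst u) fst_y) (continuousM (cst v) snd_y)) (cst w).
Qed.

Lemma conv_dir_sub_halfplane (P : set (R * R)) u v w : 0 <= u ->
  P `<=` halfplane u v w -> conv_dir P `<=` halfplane u v w.
Proof.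
move=> u_ge0 PH _ [k [p [alpha [beta [Pp alpha_ge0 sum1 beta_ge0 ->]]]]]; rewrite /halfplane /=.
have comb : \sum_(i < k) alpha i * (u * (p i).1 + v * (p i).2 + w) =
    u * \sum_(i < k) alpha i * (p i).1 + v * \sum_(i < k) alpha i * (p i).2 + w.
  rewrite -[w in RHS]mulr1 -sum1 !mulr_sumr -!big_split.
  by apply: eq_bigr => i _ /=; ring.
have : 0 <= \sum_(i < k) alpha i * (u * (p i).1 + v * (p i).2 + w).
  by apply: sumr_ge0 => i _; apply: mulr_ge0 => //; exact: PH.
have : 0 <= u * beta by exact: mulr_ge0.
lra.
Qed.

Lemma closure_conv_dir_sub_halfplane (P : set (R * R)) u v w : 0 <= u ->
  P `<=` halfplane u v w -> closure (conv_dir P) `<=` halfplane u v w.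
Proof.
move=> u_ge0 PH; rewrite (proj1 (closure_id _) (@closed_halfplane u v w)).
exact/closureS/conv_dir_sub_halfplane.
Qed.

End Halfplanes.

Lemma finite_set_argmin (T : eqType) (R : realType) (A : set T) (g : T -> R) :
  finite_set A -> A !=set0 -> exists2 a, A a & forall b, A b -> g a <= g b.
Proof.
move=> /finite_seqP[s ->] [x x_s] /=.
have : s != [::] by case: s x_s.
elim: s {x x_s} => [//|y [|z s] IHs] _.
  by exists y => [|b]; rewrite ?inE // => /eqP ->.
have [a a_s a_min] := IHs isT.
have [gya|gay] := leP (g y) (g a).
  exists y => [|b]; first by rewrite inE eqxx.
  by rewrite inE => /predU1P[->//|/a_min]; exact: le_trans.
exists a => [|b]; first by rewrite inE a_s orbT.
by rewrite inE => /predU1P[->|/a_min//]; exact: ltW.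
Qed.

Lemma finite_int_ball (M : nat) : finite_set [set k : int | (`|k| <= M)%N].
Proof.
apply: (sub_finite_set (B := (fun n : nat => n%:Z - M%:Z) @` `I_(2 * M).+1)); last first.
  exact/finite_image/finite_II.
by move=> k /= kM; exists (absz (k + M%:Z)); rewrite /= /mkset; lia.
Qed.

Section Grid.
Variables (R : realType) (N : nat).
Hypothesis N_gt0 : (0 < N)%N.

Let N_pos : 0 < N%:R :> R. Proof. by rewrite ltr0n. Qed.

Lemma finite_grid_ball (B : R) :
  finite_set [set x : R | (exists k : int, x = k%:~R / N%:R) /\ `|x| <= B].
Proof.
pose M := Num.bound (`|B| * N%:R).
have BM : `|B| * N%:R < M%:R by apply: archi_boundP; rewrite mulr_ge0 // ltW.
apply: (sub_finite_set (B := (fun k : int => k%:~R / N%:R) @` [set k : int | (`|k| <= M)%N])).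
  move=> _ [[k ->] kB]; exists k => //=.
  suff : (`|k|%N%:R : R) < M%:R by rewrite ltr_nat => /ltnW.
  rewrite natr_absz intr_norm.
  have -> : (k%:~R : R) = k%:~R / N%:R * N%:R by rewrite divfK // gt_eqF.
  rewrite normrM [`|N%:R|]gtr0_norm //; apply: le_lt_trans BM.
  by rewrite ler_pM2r //; exact: le_trans kB (ler_norm B).
exact/finite_image/finite_int_ball.
Qed.

Lemma grid_gap (r : R) : exists2 d : R, 0 < d & forall k : int,
  (k%:~R / N%:R < r -> k%:~R / N%:R + d <= r) /\
  (r < k%:~R / N%:R -> r + d <= k%:~R / N%:R).
Proof.
pose y := r * N%:R.
pose d1 := y - (Num.ceil y - 1)%:~R; pose d2 := (Num.floor y + 1)%:~R - y.
have d1_gt0 : 0 < d1 by rewrite /d1 subr_gt0 ceilB1_lt.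
have d2_gt0 : 0 < d2 by rewrite /d2 subr_gt0 floorD1_gt.
exists (Num.min d1 d2 / N%:R) => [|k]; first by rewrite divr_gt0 // lt_min d1_gt0.
have [min_d1 min_d2] : Num.min d1 d2 <= d1 /\ Num.min d1 d2 <= d2.
  by split; rewrite ge_min lexx ?orbT.
rewrite ltr_pdivrMr // ltr_pdivlMr // -mulrDl ler_pdivrMr // ler_pdivlMr //.
rewrite mulrDl divfK ?gt_eqF // -/y.
split => k_y.
- have : k%:~R <= (Num.ceil y - 1)%:~R :> R by rewrite ler_int -ltzD1 subrK ceil_gt_int.
  have : d1 = y - (Num.ceil y - 1)%:~R by [].
  lra.
- have : (Num.floor y + 1)%:~R <= k%:~R :> R by rewrite ler_int lezD1 floor_lt_int.
  have : d2 = (Num.floor y + 1)%:~R - y by [].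
  lra.
Qed.

End Grid.

Lemma sup_between (R : realType) (L U : set R) :
  L !=set0 -> has_ubound L -> (forall l u, L l -> U u -> l <= u) ->
  exists sigma, (forall l, L l -> l <= sigma) /\ (forall u, U u -> sigma <= u).
Proof.
move=> L0 Lub LU; exists (sup L); split => [l Ll|u Uu].
  exact: sup_upper_bound.
by apply: ge_sup => // l Ll; exact: LU.
Qed.

Lemma supporting_line (R : realType) (S : set (R * R)) (r0 mu K d : R) :
  0 < d -> K <= mu -> (forall s, S s -> K <= s.1) ->
  (forall s, S s -> (s.2 < r0 -> s.2 + d <= r0) /\ (r0 < s.2 -> r0 + d <= s.2)) ->
  (forall s, S s -> s.2 = r0 -> mu <= s.1) ->
  (forall p q, S p -> S q -> p.2 < r0 -> r0 < q.2 ->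
     mu * (q.2 - p.2) <= (q.2 - r0) * p.1 + (r0 - p.2) * q.1) ->
  exists sigma, S `<=` halfplane 1 (- sigma) (sigma * r0 - mu).
Proof.
move=> d_gt0 K_mu S_K S_gap S_mid S_chord.
pose L := [set (mu - p.1) / (r0 - p.2) | p in [set p | S p /\ p.2 < r0]] `|` [set (K - mu) / d].
pose U := [set (q.1 - mu) / (q.2 - r0) | q in [set q | S q /\ r0 < q.2]].
have [|||sigma [L_sigma sigma_U]] := @sup_between R L U.
- by exists ((K - mu) / d); right.
- exists ((mu - K) / d) => _ [[p [Sp p_r0] <-]|->].
    rewrite ler_pdivrMr ?subr_gt0 // mulrAC ler_pdivlMr //.
    have := (S_gap p Sp).1 p_r0; have := S_K p Sp => p_K p_gap.
    have : 0 <= (mu - K) * (r0 - p.2 - d) by apply: mulr_ge0; lra.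
    have : 0 <= (p.1 - K) * d by apply: mulr_ge0; lra.
    lra.
  by rewrite ler_pM2r ?invr_gt0 //; lra.
- move=> _ _ [[p [Sp p_r0] <-]|->] [q [Sq r0_q] <-];
    rewrite ler_pdivrMr ?subr_gt0 // mulrAC ler_pdivlMr ?subr_gt0 //.
    by have := S_chord p q Sp Sq p_r0 r0_q; lra.
  have := (S_gap q Sq).2 r0_q; have := S_K q Sq => q_K q_gap.
  have : 0 <= (mu - K) * (q.2 - r0 - d) by apply: mulr_ge0; lra.
  have : 0 <= (q.1 - K) * d by apply: mulr_ge0; lra.
  lra.
exists sigma => s Ss; rewrite /halfplane /=.
have [s_r0|r0_s|s_r0] := ltgtP s.2 r0.
- have /L_sigma : L ((mu - s.1) / (r0 - s.2)) by left; exists s.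
  rewrite ler_pdivrMr ?subr_gt0 //; lra.
- have /sigma_U : U ((s.1 - mu) / (s.2 - r0)) by exists s.
  rewrite ler_pdivlMr ?subr_gt0 //; lra.
- by have := S_mid s Ss s_r0; rewrite s_r0; lra.
Qed.

Lemma parabola_vertex_le (R : realType) (a b c r : R) :
  0 < a -> c - b ^+ 2 / (4 * a) <= a * r ^+ 2 + b * r + c.
Proof.
move=> a_gt0.
have -> : a * r ^+ 2 + b * r + c = c - b ^+ 2 / (4 * a) + (2 * a * r + b) ^+ 2 / (4 * a).
  by field; lra.
by rewrite lerDl divr_ge0 ?sqr_ge0 //; lra.
Qed.

(* The chord from (x, r0 - u) to (y, r0 + v) meets the line of second
   coordinate r0 at first coordinate (v x + u y) / (u + v). *)
Lemma chord_endpoint_bounds (R : realType) (u v x y V K E d : R) :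
  0 < d -> d <= u -> d <= v -> u * v <= E -> K <= x -> K <= y ->
  v * x + u * y <= V * (u + v) ->
  [/\ u <= E / d, v <= E / d, x <= V + (V - K) * (E / d) / d
    & y <= V + (V - K) * (E / d) / d].
Proof.
move=> d_gt0 du dv uvE Kx Ky chord.
have u_le : u <= E / d.
  by rewrite ler_pdivlMr //; apply: le_trans _ uvE; apply: ler_wpM2l; lra.
have v_le : v <= E / d.
  by rewrite ler_pdivlMr //; apply: le_trans _ uvE; rewrite [u * v]mulrC; apply: ler_wpM2l; lra.
have K_V : K <= V.
  rewrite -(ler_pM2r (_ : 0 < u + v)); last lra.
  have : 0 <= v * (x - K) by apply: mulr_ge0; lra.
  have : 0 <= u * (y - K) by apply: mulr_ge0; lra.
  lra.
have E_ge0 : 0 <= E by apply: le_trans _ uvE; apply: mulr_ge0; lra.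
have slack_ge0 : 0 <= (V - K) * (E / d) / d by rewrite !mulr_ge0 ?invr_ge0 //; lra.
have endpoint z w z' w' : d <= w -> d <= w' -> K <= z' ->
    w * z + w' * z' <= V * (w' + w) -> w' <= E / d -> z <= V + (V - K) * (E / d) / d.
  move=> dw dw' Kz' zchord w'_le.
  have [zV|Vz] := leP z V; first lra.
  rewrite -lerBlDl ler_pdivlMr //.
  have : (z - V) * d <= (z - V) * w by apply: ler_wpM2l; lra.
  have : w' * (V - z') <= w' * (V - K) by apply: ler_wpM2l; lra.
  have : w' * (V - K) <= (E / d) * (V - K) by apply: ler_wpM2r; lra.
  lra.
split => //; [apply: (endpoint x v y u) | apply: (endpoint y u x v)] => //; lra.
Qed.

Section ChordsAtHeight.
Variables (R : realType) (S : set (R * R)) (r0 : R).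
Implicit Types (p q s : R * R) (pq : (R * R) * (R * R)).

Definition straddles pq : Prop :=
  [/\ S pq.1, S pq.2 & (pq.1.2 < r0 /\ r0 < pq.2.2) \/ (pq.1 = pq.2 /\ pq.1.2 = r0)].

Definition chord_at pq : R :=
  if pq.1.2 < r0 then
    ((pq.2.2 - r0) * pq.1.1 + (r0 - pq.1.2) * pq.2.1) / (pq.2.2 - pq.1.2)
  else pq.1.1.

Lemma conv_dir_chord_at pq n : straddles pq -> chord_at pq <= n -> conv_dir S (n, r0).
Proof.
case: pq => p q [/= Sp Sq [[p_r0 r0_q]|[<- p_r0]]]; rewrite /chord_at /=; last first.
  rewrite p_r0 ltxx => pn.
  have := conv_dir_segpt_shift (t := 0) Sp Sp; rewrite segpt_id -p_r0.
  by rewrite -[X in (X, _)](subrKC p.1); apply; rewrite ?lexx ?ler01 ?subr_ge0.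
rewrite p_r0 => chord_n.
have t01 : 0 <= (r0 - p.2) / (q.2 - p.2) <= 1.
  by rewrite divr_ge0 ?ler_pdivrMr ?subr_ge0 ?subr_gt0 /=; lra.
have := conv_dir_segpt_shift (beta := n - chord_at (p, q)) Sp Sq t01.
rewrite /chord_at /= p_r0 subr_ge0 => /(_ chord_n).
by congr (conv_dir S (_, _)); rewrite /segpt /=; field; lra.
Qed.

Variables (a b c d : R).
Hypothesis a_gt0 : 0 < a.
Hypothesis S_above : forall s, S s -> a * s.2 ^+ 2 + b * s.2 + c <= s.1.
Hypothesis d_gt0 : 0 < d.
Hypothesis S_gap : forall s, S s -> (s.2 < r0 -> s.2 + d <= r0) /\ (r0 < s.2 -> r0 + d <= s.2).
Hypothesis S_ball_finite :
  forall B : R, finite_set [set s | S s /\ `|s.1| <= B /\ `|s.2| <= B].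

Let K := c - b ^+ 2 / (4 * a).

Let S_fst_ge s : S s -> K <= s.1.
Proof. by move=> Ss; apply: le_trans (S_above Ss); exact: parabola_vertex_le. Qed.

Lemma chord_at_ge pq : straddles pq ->
  a * r0 ^+ 2 + b * r0 + c + a * ((r0 - pq.1.2) * (pq.2.2 - r0)) <= chord_at pq.
Proof.
case: pq => p q [/= Sp Sq [[p_r0 r0_q]|[<- p_r0]]]; rewrite /chord_at /=; last first.
  by rewrite p_r0 ltxx subrr mul0r mulr0 addr0 -p_r0; exact: S_above.
rewrite p_r0 ler_pdivlMr ?subr_gt0; last lra.
have : 0 <= (q.2 - r0) * (p.1 - (a * p.2 ^+ 2 + b * p.2 + c)).
  by apply: mulr_ge0; have := S_above Sp; lra.
have : 0 <= (r0 - p.2) * (q.1 - (a * q.2 ^+ 2 + b * q.2 + c)).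
  by apply: mulr_ge0; have := S_above Sq; lra.
have chord_parabola : (q.2 - r0) * (a * p.2 ^+ 2 + b * p.2 + c) +
    (r0 - p.2) * (a * q.2 ^+ 2 + b * q.2 + c) =
  (a * r0 ^+ 2 + b * r0 + c + a * ((r0 - p.2) * (q.2 - r0))) * (q.2 - p.2) by ring.
lra.
Qed.

Lemma straddles_exists n : closure (conv_dir S) (n, r0) -> exists pq, straddles pq.
Proof.
move=> cl_n.
have [sl [Ssl sl_r0]] : exists sl, S sl /\ sl.2 <= r0.
  apply: contrapT => none.
  have : S `<=` halfplane 0 1 (- (r0 + d)).
    move=> s Ss; rewrite /halfplane /=; have [s_r0|r0_s] := leP s.2 r0.
      by exfalso; apply: none; exists s.
    by have := (S_gap Ss).2 r0_s; lra.
  move=> /(closure_conv_dir_sub_halfplane (lexx 0)) /(_ _ cl_n).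
  by rewrite /halfplane /= mul0r mul1r add0r; move: d_gt0; lra.
have [sr [Ssr r0_sr]] : exists sr, S sr /\ r0 <= sr.2.
  apply: contrapT => none.
  have : S `<=` halfplane 0 (-1) (r0 - d).
    move=> s Ss; rewrite /halfplane /=; have [r0_s|s_r0] := leP r0 s.2.
      by exfalso; apply: none; exists s.
    by have := (S_gap Ss).1 s_r0; lra.
  move=> /(closure_conv_dir_sub_halfplane (lexx 0)) /(_ _ cl_n).
  by rewrite /halfplane /= mul0r mulN1r add0r; move: d_gt0; lra.
have [sl_eq|sl_neq] := eqVneq sl.2 r0; first by exists (sl, sl); split => //; right.
have [sr_eq|sr_neq] := eqVneq sr.2 r0; first by exists (sr, sr); split => //; right.
by exists (sl, sr); split => //; left; rewrite /= !lt_neqAle sl_neq sl_r0 eq_sym sr_neq.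
Qed.

Lemma straddles_bounded V : exists B,
  [set pq | straddles pq /\ chord_at pq <= V] `<=`
  [set s | S s /\ `|s.1| <= B /\ `|s.2| <= B] `*` [set s | S s /\ `|s.1| <= B /\ `|s.2| <= B].
Proof.
pose E := (V - (a * r0 ^+ 2 + b * r0 + c)) / a.
pose slack := (V - K) * (E / d) / d.
exists (`|r0| + `|K| + `|V| + `|E / d| + `|slack|).
move=> [p q] [st chord_V]; case: (st) => /= Sp Sq p_q_pos.
have Kp := S_fst_ge Sp; have Kq := S_fst_ge Sq.
have norms (x : R) : x <= `|x| /\ - `|x| <= x.
  by split; [exact: ler_norm | rewrite lerNl -normrN ler_norm].
have [r0_le ge_r0] := norms r0; have [K_le ge_K] := norms K; have [V_le ge_V] := norms V.
have [Ed_le ge_Ed] := norms (E / d); have [slack_le ge_slack] := norms slack.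
have box_le (x B : R) : x <= B -> - B <= x -> `|x| <= B.
  by move=> xB Bx; rewrite ler_norml Bx xB.
case: p_q_pos => [[p_r0 r0_q]|[<- p_r0]]; last first.
  move: chord_V; rewrite /chord_at p_r0 ltxx /= => pV.
  by split; split => //; split; apply: box_le; lra.
have uvE : (r0 - p.2) * (q.2 - r0) <= E.
  by rewrite /E ler_pdivlMr // mulrC; have := le_trans (chord_at_ge st) chord_V; lra.
move: chord_V; rewrite /chord_at /= p_r0 ler_pdivrMr ?subr_gt0; last lra.
rewrite -[q.2 - p.2](subrKA r0) [q.2 - r0 + _]addrC => chord_V.
have du : d <= r0 - p.2 by have := (S_gap Sp).1 p_r0; lra.
have dv : d <= q.2 - r0 by have := (S_gap Sq).2 r0_q; lra.
have [u_le v_le p_le q_le] := chord_endpoint_bounds d_gt0 du dv uvE Kp Kq chord_V.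
rewrite -/slack in p_le q_le.
by split; split => //; split; apply: box_le; lra.
Qed.

Lemma chord_at_min pq0 : straddles pq0 ->
  exists2 pq, straddles pq & forall pq', straddles pq' -> chord_at pq <= chord_at pq'.
Proof.
move=> st0; have [B sub_box] := straddles_bounded (chord_at pq0).
have fin : finite_set [set pq | straddles pq /\ chord_at pq <= chord_at pq0].
  by apply: sub_finite_set sub_box _; apply: finite_setX; apply: S_ball_finite.
have [|pq [st pq_le] pq_min] := finite_set_argmin chord_at fin; first by exists pq0.
exists pq => // pq' st'; have [le0|gt0] := leP (chord_at pq') (chord_at pq0).
  exact: pq_min.
by apply: le_trans pq_le _; exact: ltW.
Qed.

Lemma closure_conv_dir_at n : closure (conv_dir S) (n, r0) -> conv_dir S (n, r0).
Proof.
move=> cl_n; have [pq0 st0] := straddles_exists cl_n.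
have [pq st pq_min] := chord_at_min st0.
have K_le : K <= chord_at pq.
  apply: le_trans (parabola_vertex_le b c r0 a_gt0) _; apply: le_trans (chord_at_ge st).
  rewrite lerDl; apply: mulr_ge0; first exact: ltW.
  by case: st => _ _ [[p_r0 r0_q]|[_ ->]]; [apply: mulr_ge0; lra | rewrite subrr mul0r].
have [||sigma S_half] := supporting_line d_gt0 K_le S_fst_ge S_gap.
- move=> s Ss s_r0; have := pq_min (s, s); rewrite /chord_at /= s_r0 ltxx; apply.
  by split => //; right.
- move=> p q Sp Sq p_r0 r0_q; have := pq_min (p, q); rewrite /chord_at /= p_r0.
  by rewrite ler_pdivlMr ?subr_gt0; [apply; split => //; left | lra].
have := closure_conv_dir_sub_halfplane ler01 S_half cl_n; rewrite /halfplane /= mul1r.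
by move=> n_ge; apply: conv_dir_chord_at st _; lra.
Qed.

End ChordsAtHeight.

Lemma closure_conv_dir_parabolic (R : realType) (S : set (R * R)) (a b c : R) :
  0 < a -> (forall s, S s -> a * s.2 ^+ 2 + b * s.2 + c <= s.1) ->
  (forall r0, exists2 d, 0 < d & forall s, S s ->
     (s.2 < r0 -> s.2 + d <= r0) /\ (r0 < s.2 -> r0 + d <= s.2)) ->
  (forall B : R, finite_set [set s | S s /\ `|s.1| <= B /\ `|s.2| <= B]) ->
  closure (conv_dir S) = conv_dir S.
Proof.
move=> a_gt0 S_above S_gap S_ball_finite.
apply/seteqP; split => [[n r0]|]; last exact: subset_closure.
have [d d_gt0 S_gap_r0] := S_gap r0.
exact: (closure_conv_dir_at a_gt0 S_above d_gt0 S_gap_r0 S_ball_finite).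
Qed.

Section Support.
Variables (R : realType) (N : nat) (f : coeffs R).
Hypothesis N_gt0 : (0 < N)%N.

Lemma supp_gap (r0 : R) : exists2 d : R, 0 < d & forall s, supp N f s ->
  (s.2 < r0 -> s.2 + d <= r0) /\ (r0 < s.2 -> r0 + d <= s.2).
Proof.
have [d d_gt0 gap] := grid_gap N_gt0 r0.
by exists d => // _ [k [l [-> _]]]; exact: gap.
Qed.

Lemma supp_ball_finite (B : R) :
  finite_set [set s | supp N f s /\ `|s.1| <= B /\ `|s.2| <= B].
Proof.
apply: sub_finite_set (finite_setX (finite_grid_ball N_gt0 B) (finite_grid_ball N_gt0 B)).
by move=> _ [[k [l [-> _]]] [k_B l_B]]; split; split => //; [exists k | exists l].
Qed.

End Support.

Theorem lemma4p4 (R : realType) (N : nat) (f : coeffs R) :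
  (0 < N)%N -> in_RJ N f -> (exists a b : int, f a b != 0) ->
  (forall x, extreme_point (nuJ N f) x -> supp N f x) /\
  nuJ N f = closure (conv_dir (supp N f)) /\
  closure (conv_dir (supp N f)) = conv_dir (supp N f).
Proof.
move=> N_gt0 [_ [a [b [c [a_gt0 supp_above]]]]] _.
have closed_hull : closure (conv_dir (supp N f)) = conv_dir (supp N f).
  exact: closure_conv_dir_parabolic a_gt0 supp_above
    (supp_gap f N_gt0) (supp_ball_finite f N_gt0).
split; last by split.
by rewrite /nuJ closed_hull; exact: extreme_point_conv_dir.
Qed.
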